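(* Let $F\subset D$ be relatively closed in $D$ with $F\neq D$, let $Q\subset F$ be relatively closed in $D$, and let $\mu\in\mathfrak M^+(D)$ with $\mu|_{F^r}\in\breve{\mathfrak M}^+(F^r)$ and $\mu|_{Q^r}\in\breve{\mathfrak M}^+(Q^r)$. Then $$\mu^Q_{g_\alpha}=\bigl(\mu^F_{g_\alpha}\bigr)^Q_{g_\alpha}.$$
   Context: Fix $n\ge 2$, $\alpha\in(0,n)$ with $\alpha\le 2$, a domain $D\subset\mathbb R^n$ (possibly $D=\mathbb R^n$), and $Y:=\mathbb R^n\setminus D$. ''Measure'' means a positive Radon measure $\nu$ on $\mathbb R^n$ with $\int_{|y|>1}|y|^{\alpha-n}d\nu(y)<\infty$; $\mathfrak M^+(B)$ is the set of such measures concentrated on the Borel set $B$, $\nu|_B$ the restriction to $B$. $\kappa_\alpha(x,y)=|x-y|^{\alpha-n}$, $U^\nu_{\kappa_\alpha}=\int\kappa_\alpha(\cdot,y)d\nu(y)$; $c_{\kappa_\alpha}$ is the outer $\alpha$-Riesz capacity; $\nu$ is $c_{\kappa_\alpha}$-absolutely continuous if it vanishes on Borel sets of zero capacity, and $\breve{\mathfrak M}^+(B)$ is the set of such elements of $\mathfrak M^+(B)$. $(\varepsilon_x)^Y_{\kappa_\alpha}$ is the $\alpha$-Riesz balayage of $\varepsilon_x$ onto $Y$ (the unique measure in $\breve{\mathfrak M}^+(Y)$ whose $\kappa_\alpha$-potential equals $U^{\varepsilon_x}_{\kappa_\alpha}$ q.e. on $Y$). The $\alpha$-Green kernel is $g_\alpha(x,y)=|x-y|^{\alpha-n}-U_{\kappa_\alpha}^{(\varepsilon_x)^Y_{\kappa_\alpha}}(y)$,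 $x\in D$; $U^\xi_{g_\alpha}=\int g_\alpha(\cdot,y)d\xi(y)$. For a set $E$ relatively closed in $D$, $E^r$ is the set of $\kappa_\alpha$-regular points of $E$: $x\in E$ with $\sum_j c_{\kappa_\alpha}(E\cap\{q^{j+1}<|x-y|\le q^j\})q^{-j(n-\alpha)}=\infty$ ($q\in(0,1)$). For $E\ne D$ relatively closed in $D$ and $\nu\in\mathfrak M^+(D)$ with $\nu|_{E^r}$ $c_{\kappa_\alpha}$-absolutely continuous, the $g_\alpha$-balayage $\nu^E_{g_\alpha}$ is the unique measure in $\breve{\mathfrak M}^+(E)$ with $U^{\nu^E_{g_\alpha}}_{g_\alpha}=U^\nu_{g_\alpha}$ at every point of $E^r$ (it exists and is unique). *)

From HB Require Import structures.
From mathcomp Require Import all_boot all_order all_algebra.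
From mathcomp Require Import all_classical all_reals all_analysis.
From Stdlib Require Import ClassicalEpsilon.
Set Implicit Arguments. Unset Strict Implicit. Unset Printing Implicit Defensive.
Import Order.TTheory GRing.Theory Num.Theory.
Import numFieldNormedType.Exports.
Local Open Scope classical_set_scope.
Local Open Scope ring_scope.

Definition Pt (R : realType) (n : nat) :=
  g_sigma_algebraType (@open 'rV[R]_n).

Definition enorm (R : realType) (n : nat) (x : 'rV[R]_n) : R :=
  Num.sqrt (\sum_(i < n) x ord0 i ^+ 2).

Definition kappa (R : realType) (n : nat) (alpha : R) (x y : 'rV[R]_n) : \bar R :=
  if x == y then +oo%E else ((enorm (x - y)) `^ (alpha - n%:R))%:E.

Definition rpot (R : realType) (n : nat) (alpha : R)
    (m : set (Pt R n) -> \bar R) (x : Pt R n) : \bar R :=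
  (\int[m]_(y in [set: Pt R n]) kappa alpha x y)%E.

(* "measure" in the sense of the paper: positive Radon (locally finite Borel)
   measure with int_{|y|>1} |y|^(alpha-n) dm(y) < oo *)
Definition is_meas (R : realType) (n : nat) (alpha : R)
    (m : {measure set (Pt R n) -> \bar R}) : Prop :=
  (forall K : set 'rV[R]_n, compact K -> (m K < +oo)%E) /\
  (\int[m]_(y in [set y : Pt R n | (1 < enorm y)%R])
      ((enorm y) `^ (alpha - n%:R))%R%:E < +oo)%E.

Definition concentrated (R : realType) (n : nat)
    (m : {measure set (Pt R n) -> \bar R}) (B : set (Pt R n)) : Prop :=
  m (~` B) = 0%E.

Definition energy (R : realType) (n : nat) (alpha : R)
    (m : {measure set (Pt R n) -> \bar R}) : \bar R :=
  (\int[m]_(x in [set: Pt R n]) \int[m]_(y in [set: Pt R n]) kappa alpha x y)%E.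

(* capacity of a compact set K: 1 / inf { I(nu) : nu in M^+(K), nu(K) = 1 }
   (= 0 if the infimum is +oo) *)
Definition cap_compact (R : realType) (n : nat) (alpha : R)
    (K : set (Pt R n)) : \bar R :=
  let W := ereal_inf [set energy alpha nu |
             nu in [set nu : {measure set (Pt R n) -> \bar R} |
               is_meas alpha nu /\ concentrated nu K /\ nu K = 1%E]] in
  ((fine W)^-1)%:E.

Definition cap_in (R : realType) (n : nat) (alpha : R) (E : set (Pt R n)) : \bar R :=
  ereal_sup [set cap_compact alpha K |
    K in [set K : set (Pt R n) | compact (K : set 'rV[R]_n) /\ K `<=` E]].

Definition cap (R : realType) (n : nat) (alpha : R) (E : set (Pt R n)) : \bar R :=
  ereal_inf [set cap_in alpha G |
    G in [set G : set (Pt R n) | open (G : set 'rV[R]_n) /\ E `<=` G]].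

Definition abscont (R : realType) (n : nat) (alpha : R)
    (m : {measure set (Pt R n) -> \bar R}) : Prop :=
  forall A : set (Pt R n), measurable A -> cap alpha A = 0%E -> m A = 0%E.

(* m|_B is c_{kappa_alpha}-absolutely continuous *)
Definition restr_abscont (R : realType) (n : nat) (alpha : R)
    (m : {measure set (Pt R n) -> \bar R}) (B : set (Pt R n)) : Prop :=
  forall A : set (Pt R n), measurable A -> cap alpha A = 0%E -> m (A `&` B) = 0%E.

(* m is the alpha-Riesz balayage of eps_x onto Y *)
Definition is_rbal_pt (R : realType) (n : nat) (alpha : R)
    (x : Pt R n) (Y : set (Pt R n)) (m : {measure set (Pt R n) -> \bar R}) : Prop :=
  is_meas alpha m /\ concentrated m Y /\ abscont alpha m /\
  cap alpha [set y | Y y /\ rpot alpha m y <> kappa alpha x y] = 0%E.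

Definition rbal_pt (R : realType) (n : nat) (alpha : R)
    (D : set (Pt R n)) (x : Pt R n) : {measure set (Pt R n) -> \bar R} :=
  epsilon (inhabits (mzero : {measure set (Pt R n) -> \bar R})) (is_rbal_pt alpha x (~` D)).

Definition galpha (R : realType) (n : nat) (alpha : R)
    (D : set (Pt R n)) (x y : Pt R n) : \bar R :=
  (kappa alpha x y - rpot alpha (rbal_pt alpha D x) y)%E.

Definition gpot (R : realType) (n : nat) (alpha : R)
    (D : set (Pt R n)) (xi : set (Pt R n) -> \bar R) (x : Pt R n) : \bar R :=
  (\int[xi]_(y in [set: Pt R n]) galpha alpha D x y)%E.

(* E^r : kappa_alpha-regular points of E (Wiener criterion with q = 1/2) *)
Definition reg (R : realType) (n : nat) (alpha : R) (E : set (Pt R n)) : set (Pt R n) :=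
  [set x | E x /\
    (\sum_(0 <= j <oo)
       (cap alpha (E `&` [set y : Pt R n |
            ((2^-1) ^+ j.+1 < enorm (x - y) <= (2^-1) ^+ j)%R]) *
        ((2 : R) `^ (j%:R * (n%:R - alpha)))%:E))%E = +oo%E].

Definition domain (R : realType) (n : nat) (D : set (Pt R n)) : Prop :=
  open (D : set 'rV[R]_n) /\ connected (D : set 'rV[R]_n) /\ D !=set0.

Definition rel_closed (R : realType) (n : nat) (D F : set (Pt R n)) : Prop :=
  F `<=` D /\ exists C : set 'rV[R]_n, closed C /\ F = C `&` D.

Definition is_gbal (R : realType) (n : nat) (alpha : R) (D : set (Pt R n))
    (nu : {measure set (Pt R n) -> \bar R}) (E : set (Pt R n))
    (xi : {measure set (Pt R n) -> \bar R}) : Prop :=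
  is_meas alpha xi /\ concentrated xi E /\ abscont alpha xi /\
  forall x, reg alpha E x -> gpot alpha D xi x = gpot alpha D nu x.

From HB Require Import structures.
From mathcomp Require Import all_boot all_order all_algebra.
From mathcomp Require Import all_classical all_reals all_analysis.
Import Order.TTheory GRing.Theory Num.Theory.
Import numFieldNormedType.Exports.
Local Open Scope classical_set_scope.
Local Open Scope ring_scope.

(* Capacity is monotone, so every term of the Wiener series of Q is bounded by
   the corresponding term for F, and Q^r is contained in F^r.  On Q^r the Green
   potentials of mu^F and mu therefore coincide, and mu^Q meets the defining
   conditions of the balayage of mu^F onto Q. *)

Section RieszCapacity.
Variables (R : realType) (n : nat) (alpha : R).

Lemma kappa_ge0 (x y : 'rV[R]_n) : (0 <= kappa alpha x y)%E.
Proof. by rewrite /kappa; case: ifP => _ //; rewrite lee_fin powR_ge0. Qed.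

Lemma cap_compact_ge0 (K : set (Pt R n)) : (0 <= cap_compact alpha K)%E.
Proof.
rewrite /cap_compact lee_fin invr_ge0 fine_ge0 //.
apply: le_ereal_inf_tmp => _ [nu _ <-].
apply: integral_ge0 => x _; apply: integral_ge0 => y _; exact: kappa_ge0.
Qed.

Lemma cap_in_ge0 (E : set (Pt R n)) : (0 <= cap_in alpha E)%E.
Proof.
apply: le_trans (cap_compact_ge0 set0) _.
by apply: ereal_sup_ubound; exists set0 => //; split; [exact: compact0|].
Qed.

Lemma cap_ge0 (E : set (Pt R n)) : (0 <= cap alpha E)%E.
Proof. apply: le_ereal_inf_tmp => _ [G _ <-]; exact: cap_in_ge0. Qed.

Lemma le_cap (A B : set (Pt R n)) : A `<=` B -> (cap alpha A <= cap alpha B)%E.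
Proof.
move=> AB; apply: ereal_inf_le_tmp => _ [G [oG BG] <-].
by exists G => //; split => //; exact: subset_trans BG.
Qed.

Lemma reg_subset (Q F : set (Pt R n)) : Q `<=` F -> reg alpha Q `<=` reg alpha F.
Proof.
move=> QF x [Qx wienerQ]; split; first exact: QF.
apply/eqP; rewrite eq_le leey /= -wienerQ.
apply: lee_nneseries => [j _ _|j _].
  by apply: mule_ge0; [exact: cap_ge0 | rewrite lee_fin powR_ge0].
apply: lee_wpmul2r; first by rewrite lee_fin powR_ge0.
by apply: le_cap => y [Qy ?]; split => //; exact: QF.
Qed.

Lemma is_gbal_eq_gpot (D E : set (Pt R n)) (nu nu' xi : {measure set (Pt R n) -> \bar R}) :
  {in reg alpha E, gpot alpha D nu =1 gpot alpha D nu'} ->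
  is_gbal alpha D nu E xi -> is_gbal alpha D nu' E xi.
Proof.
move=> eq_nu [mxi [cxi [axi gpot_xi]]]; do 3!split => //.
by move=> x Ex; rewrite gpot_xi // eq_nu // inE.
Qed.

End RieszCapacity.

Theorem corollary2p5 (R : realType) (n : nat) (alpha : R)
    (D F Q : set (Pt R n)) (mu : {measure set (Pt R n) -> \bar R}) :
  (2 <= n)%N -> 0 < alpha -> alpha < n%:R -> alpha <= 2 ->
  domain D ->
  rel_closed D F -> F <> D -> rel_closed D Q -> Q `<=` F ->
  is_meas alpha mu -> concentrated mu D ->
  restr_abscont alpha mu (reg alpha F) ->
  restr_abscont alpha mu (reg alpha Q) ->
  forall muF muQ : {measure set (Pt R n) -> \bar R},
    is_gbal alpha D mu F muF ->
    is_gbal alpha D mu Q muQ ->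
    is_gbal alpha D muF Q muQ.
Proof.
move=> _ _ _ _ _ _ _ _ QF _ _ _ _ muF muQ [_ [_ [_ gpot_muF]]].
apply: is_gbal_eq_gpot => x /[!inE] Qx.
by rewrite gpot_muF //; exact: reg_subset Qx.
Qed.
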